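(* If $C$ and $C'$ are two cycle graphs with the same degree sequence, then there exists a u-switch sequence transforming $C$ into $C'$: 2-switches $\tau_1,\dots,\tau_k$ ($k\ge0$) such that, with $C_0=C$ and $C_i=\tau_i(C_{i-1})$, each $\tau_i$ is a u-switch over $C_{i-1}$ and $C_k=C'$.
   Context: Graphs are finite, simple, undirected, labeled with vertex set $[n]$; the degree sequence of $G$ is $(d_1,\dots,d_n)$ with $d_i$ the degree of vertex $i$ (so two graphs have the same degree sequence iff each vertex has the same degree in both). A unicyclic graph is a connected graph with exactly one cycle. For vertices $a,b,c,d$, $A=\binom{a\ b}{c\ d}$ is interchangeable in $G$ if $ab,cd\in E(G)$, $\{a,b\}\cap\{c,d\}=\varnothing$, $ac,bd\notin E(G)$; the 2-switch $\tau_A$ sends $G$ to $G-ab-cd+ac+bd$ if $A$ is interchangeable and to $G$ otherwise (trivial). A nontrivial 2-switch $\tau$ over a unicyclic $U$ is a u-switch if $\tau(U)$ is unicyclic. *)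

From mathcomp Require Import all_boot.
Set Implicit Arguments. Unset Strict Implicit. Unset Printing Implicit Defensive.

(* A graph on vertex set [n] = 'I_n is given by its set of ordered adjacent
   pairs: the edge {u,v} is present iff (u,v) \in G (and then (v,u) \in G). *)
Definition graph (n : nat) := {set 'I_n * 'I_n}.

Section Graphs.
Variable n : nat.
Implicit Types (G S : graph n) (u v a b c d : 'I_n).

Definition adj G : rel 'I_n := fun u v => (u, v) \in G.

Definition simple_graph G : Prop :=
  (forall u v, (u, v) \in G -> (v, u) \in G) /\ (forall u, (u, u) \notin G).

Definition deg G v : nat := #|[set u | (v, u) \in G]|.

Definition same_degree_sequence G G' : Prop := forall v, deg G v = deg G' v.

Definition connected G : Prop := forall u v, connect (adj G) u v.

Definition simple_graphb G : bool :=
  [forall u, forall v, ((u, v) \in G) ==> ((v, u) \in G)] &&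
  [forall u, (u, u) \notin G].

Definition is_cycle S : bool :=
  [&& simple_graphb S, S != set0,
      [forall v, (deg S v == 0) || (deg S v == 2)] &
      [forall u, forall v,
         (0 < deg S u) ==> (0 < deg S v) ==> connect (adj S) u v]].

Definition cycles_of G : {set graph n} :=
  [set S : graph n | (S \subset G) && is_cycle S].

Definition unicyclic G : Prop :=
  simple_graph G /\ connected G /\ #|cycles_of G| = 1.

Definition cycle_graph G : Prop :=
  0 < n /\ simple_graph G /\ connected G /\ forall v, deg G v = 2.

(* A = (a b / c d) *)
Definition switch := ('I_n * 'I_n * 'I_n * 'I_n)%type.

Definition interchangeable G (A : switch) : Prop :=
  let: (a, b, c, d) := A in
  [/\ (a, b) \in G, (c, d) \in G,
      [/\ a != c, a != d, b != c & b != d],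
      (a, c) \notin G & (b, d) \notin G].

Definition interchangeableb G (A : switch) : bool :=
  let: (a, b, c, d) := A in
  [&& (a, b) \in G, (c, d) \in G,
      [&& a != c, a != d, b != c & b != d],
      (a, c) \notin G & (b, d) \notin G].

Definition tau (A : switch) G : graph n :=
  let: (a, b, c, d) := A in
  if interchangeableb G A then
    (G :\: [set (a, b); (b, a); (c, d); (d, c)])
      :|: [set (a, c); (c, a); (b, d); (d, b)]
  else G.

Definition u_switch U (A : switch) : Prop :=
  unicyclic U /\ interchangeable U A /\ unicyclic (tau A U).

Fixpoint u_switch_sequence U (s : seq switch) U' : Prop :=
  match s with
  | [::] => U = U'
  | A :: s' => u_switch U A /\ u_switch_sequence (tau A U) s' U'
  end.

End Graphs.

From mathcomp Require Import all_boot all_fingroup zify.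
Set Implicit Arguments. Unset Strict Implicit. Unset Printing Implicit Defensive.

(* A cycle graph on n vertices is the standard n-cycle 0 - 1 - ... - (n-1) - 0
   relabelled by a permutation g from vertices to positions. Reversing the
   block of positions k..j (0 < k < j < n) deletes the edges {k-1, k} and
   {j, j+1} and adds {k-1, j} and {k, j+1}: it is a 2-switch between two cycle
   graphs, and cycle graphs are unicyclic, so it is a u-switch. Such reversals
   sort the positions of C into those of C' one position at a time, without
   disturbing the positions already placed; the one reversal that is not a
   2-switch (k = 1, j = n-1) is replaced by the reflection of the positions,
   which leaves the graph unchanged. *)

Section CycleGraphs.
Variable n : nat.
Implicit Types (G S : graph n) (A : switch n).

Definition nbhd G x : {set 'I_n} := [set y | (x, y) \in G].

Lemma card_nbhd G x : #|nbhd G x| = deg G x. Proof. by []. Qed.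

Lemma nbhd_subset_eq G S x :
  S \subset G -> deg S x = deg G x -> nbhd S x = nbhd G x.
Proof.
move=> sSG dx; apply/eqP; rewrite eqEcard !card_nbhd dx leqnn andbT.
by apply/subsetP=> y; rewrite !inE => /(subsetP sSG).
Qed.

Lemma subset_regular_eq G S :
  S \subset G -> (forall x, deg S x = deg G x) -> S = G.
Proof.
move=> sSG dSG; apply/setP=> -[x y]; apply/idP/idP=> [/(subsetP sSG)//|xy].
have : y \in nbhd G x by rewrite inE.
by rewrite -(nbhd_subset_eq sSG (dSG x)) inE.
Qed.

Lemma simple_graphP G : reflect (simple_graph G) (simple_graphb G).
Proof.
apply: (iffP andP) => [[/forallP symG /forallP loopG]|[symG loopG]]; split.
- by move=> u v; move/forallP: (symG u) => /(_ v) /implyP.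
- exact: loopG.
- by apply/forallP=> u; apply/forallP=> v; apply/implyP; apply: symG.
- exact/forallP.
Qed.

Lemma cycle_graph_order G : cycle_graph G -> 2 < n.
Proof.
move=> [n0 [[_ loopG] [_ dG]]]; pose x := Ordinal n0.
have : nbhd G x \subset [set~ x].
  by apply/subsetP=> y; rewrite !inE; apply: contraTneq => ->; apply: loopG.
by move/subset_leq_card; rewrite cardsC1 card_ord card_nbhd dG; lia.
Qed.

Lemma cycle_graph_unicyclic G : cycle_graph G -> unicyclic G.
Proof.
move=> [n0 [sG [cG dG]]]; do 2!split=> //.
have symG u v : (u, v) \in G -> (v, u) \in G by case: sG => + _; apply.
suff -> : cycles_of G = [set G] by rewrite cards1.
apply/setP=> S; rewrite !inE; apply/andP/eqP=> [[sSG cycS]|->]; last first.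
  split=> //; apply/and4P; split.
  - exact/simple_graphP.
  - have : 0 < deg G (Ordinal n0) by rewrite dG.
    rewrite card_gt0 => /set0Pn[y]; rewrite inE => xy.
    by apply/set0Pn; exists (Ordinal n0, y).
  - by apply/forallP=> v; rewrite dG.
  - by do 2 apply/forallP=> ?; do 2 apply/implyP=> _; apply: cG.
case/and4P: cycS => /simple_graphP[symS _] /set0Pn[[u0 v0] uv0] /forallP deg02 _.
have deg2 x : 0 < deg S x -> deg S x = 2 by case/orP: (deg02 x) => /eqP->.
(* Around a vertex of S-degree 2, S and G have the same neighbours, so these
   vertices form a union of connected components of G. *)
have closedS : closed (adj G) [pred x | deg S x == 2].
  suff fwd x y : adj G x y -> deg S x == 2 -> deg S y == 2.
    by move=> x y xy; apply/idP/idP; apply: fwd => //; apply: symG.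
  move=> xy /eqP dx; apply/eqP/deg2; rewrite card_gt0; apply/set0Pn; exists x.
  have : y \in nbhd G x by rewrite inE.
  by rewrite -(nbhd_subset_eq sSG (etrans dx (esym (dG x)))) !inE => /symS.
apply: subset_regular_eq => // x; rewrite dG; apply/eqP.
have := closed_connect closedS (cG u0 x); rewrite !inE => <-.
by apply/eqP/deg2; rewrite card_gt0; apply/set0Pn; exists v0; rewrite inE.
Qed.

Lemma interchangeableP G A : reflect (interchangeable G A) (interchangeableb G A).
Proof.
case: A => [[[a b] c] d] /=; apply: (iffP and5P).
  by case=> ? ? /and4P[? ? ? ?] ? ?; split.
by case=> ? ? [? ? ? ?] ? ?; split=> //; apply/and4P.
Qed.

Lemma cycle_graph_u_switch G A :
  cycle_graph G -> interchangeableb G A -> cycle_graph (tau A G) -> u_switch G A.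
Proof.
move=> cycG /interchangeableP iA cycGA.
by split; [|split=> //]; apply: cycle_graph_unicyclic.
Qed.

Lemma u_switch_sequence_cat G H K s t :
  u_switch_sequence G s H -> u_switch_sequence H t K ->
  u_switch_sequence G (s ++ t) K.
Proof. by elim: s G => [G /= -> //|A s IH G [uA sA] tK]; split; last exact: IH. Qed.

End CycleGraphs.

Section HamiltonianCycles.
Variable m : nat.
Local Notation n := m.+3.

Definition cadj (u w : nat) : bool :=
  (w == u.+1) || (u == w.+1) || ((u == m.+2) && (w == 0)) || ((w == m.+2) && (u == 0)).
Definition csucc p := if p == m.+2 then 0 else p.+1.
Definition cpred p := if p == 0 then m.+2 else p.-1.

Lemma cadjE p q : p < n -> q < n -> cadj p q = (q == csucc p) || (q == cpred p).
Proof. rewrite /csucc /cpred /cadj; case: ifP; case: ifP; lia. Qed.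
Lemma cadj_sym u w : cadj u w = cadj w u. Proof. rewrite /cadj; lia. Qed.
Lemma cadj_irr u : u < n -> cadj u u = false. Proof. rewrite /cadj; lia. Qed.
Lemma csucc_lt p : p < n -> csucc p < n. Proof. rewrite /csucc; case: ifP; lia. Qed.
Lemma cpred_lt p : p < n -> cpred p < n. Proof. rewrite /cpred; case: ifP; lia. Qed.
Lemma eq_cpred p q : p < n -> q < n -> (q == cpred p) = (p == csucc q).
Proof. rewrite /csucc /cpred; case: ifP; case: ifP; lia. Qed.
Lemma csucc_neq_cpred p : p < n -> csucc p != cpred p.
Proof. rewrite /csucc /cpred; case: ifP; case: ifP; lia. Qed.
Lemma cadj_csucc p : p < n -> cadj p (csucc p).
Proof. by move=> pn; rewrite cadjE ?csucc_lt // eqxx. Qed.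

Section SegmentReversal.
Variables k j : nat.

Definition rev_nat q := if (k <= q) && (q <= j) then k + j - q else q.

Definition removed u w := [|| (u == k.-1) && (w == k), (u == k) && (w == k.-1),
   (u == j) && (w == csucc j) | (u == csucc j) && (w == j)].
Definition added u w := [|| (u == k.-1) && (w == j), (u == j) && (w == k.-1),
   (u == k) && (w == csucc j) | (u == csucc j) && (w == k)].
Definition switched u w := (~~ removed u w && cadj u w) || added u w.

Lemma rev_nat_out q : ~~ ((k <= q) && (q <= j)) -> rev_nat q = q.
Proof. by rewrite /rev_nat => /negbTE ->. Qed.
Lemma rev_nat_in q : (k <= q) && (q <= j) -> rev_nat q = k + j - q.
Proof. by rewrite /rev_nat => ->. Qed.
Lemma rev_natK : involutive rev_nat.
Proof.
move=> q; rewrite /rev_nat; case: (boolP ((k <= q) && (q <= j))) => [qkj|/negbTE-> //].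
have -> : (k <= k + j - q) && (k + j - q <= j) by lia.
lia.
Qed.

Hypothesis jn : j <= m.+2.

Lemma rev_nat_lt q : q < n -> rev_nat q < n.
Proof. rewrite /rev_nat; case: ifP; lia. Qed.

Hypotheses (k0 : 0 < k) (kj : k < j).
Hypothesis not_wrap : ~~ ((k == 1) && (j == m.+2)).

Lemma rev_nat_k : rev_nat k = j. Proof. rewrite rev_nat_in; lia. Qed.
Lemma rev_nat_j : rev_nat j = k. Proof. rewrite rev_nat_in; lia. Qed.
Lemma rev_nat_k1 : rev_nat k.-1 = k.-1. Proof. rewrite rev_nat_out; lia. Qed.
Lemma rev_nat_csucc_j : rev_nat (csucc j) = csucc j.
Proof. apply: rev_nat_out; rewrite /csucc; case: ifP; lia. Qed.

Lemma removed_sym u w : removed u w = removed w u.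
Proof.
by apply/idP/idP => /or4P[] /andP[/eqP-> /eqP->]; rewrite /removed !eqxx ?orbT.
Qed.
Lemma added_sym u w : added u w = added w u.
Proof.
by apply/idP/idP => /or4P[] /andP[/eqP-> /eqP->]; rewrite /added !eqxx ?orbT.
Qed.
Lemma switched_sym u w : switched u w = switched w u.
Proof. by rewrite /switched removed_sym added_sym cadj_sym. Qed.

Lemma switched_rev_csucc q : q < n -> switched (rev_nat q) (rev_nat (csucc q)).
Proof.
move=> qn; rewrite /switched.
have [qk|] := ltnP q.+1 k.
  have -> : csucc q = q.+1 by rewrite /csucc; case: ifP; lia.
  rewrite !rev_nat_out; try lia.
  rewrite (_ : removed q q.+1 = false); first by rewrite /cadj eqxx.
  rewrite /removed /csucc; case: ifP; lia.
rewrite leq_eqVlt => /orP[/eqP qk|kq].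
  have -> : q = k.-1 by lia.
  have -> : csucc k.-1 = k by rewrite /csucc; case: ifP; lia.
  by rewrite rev_nat_k rev_nat_k1 /added eqxx eqxx orbT.
have [qj|] := ltnP q j.
  have -> : csucc q = q.+1 by rewrite /csucc; case: ifP; lia.
  rewrite !rev_nat_in; try lia.
  rewrite (_ : removed (k + j - q) (k + j - q.+1) = false); first by rewrite /cadj; lia.
  rewrite /removed /csucc; case: ifP; lia.
rewrite leq_eqVlt => /orP[/eqP jq|jq].
  by rewrite -jq rev_nat_j rev_nat_csucc_j /added !eqxx !orbT.
rewrite rev_nat_out; last lia.
rewrite rev_nat_out; last by rewrite /csucc; case: ifP; lia.
rewrite cadj_csucc // andbT (_ : removed q (csucc q) = false) //.
rewrite /removed /csucc; case: ifP; case: ifP; lia.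
Qed.

Lemma cadj_rev_csucc u : u < n -> ~~ removed u (csucc u) ->
  cadj (rev_nat u) (rev_nat (csucc u)).
Proof.
move=> un nrem.
have [uk|] := ltnP u.+1 k.
  have -> : csucc u = u.+1 by rewrite /csucc; case: ifP; lia.
  by rewrite !rev_nat_out; try lia; rewrite /cadj eqxx.
rewrite leq_eqVlt => /orP[/eqP uk|ku].
  have eu : u = k.-1 by lia.
  have ek : csucc u = k by rewrite /csucc; case: ifP; lia.
  by move: nrem; rewrite ek eu /removed !eqxx.
have [uj|] := ltnP u j.
  have -> : csucc u = u.+1 by rewrite /csucc; case: ifP; lia.
  rewrite !rev_nat_in; try lia.
  rewrite /cadj; lia.
rewrite leq_eqVlt => /orP[/eqP ju|ju].
  by move: nrem; rewrite -ju /removed !eqxx !orbT.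
rewrite rev_nat_out; last lia.
rewrite rev_nat_out; last by rewrite /csucc; case: ifP; lia.
exact: cadj_csucc.
Qed.

Lemma cadj_rev_added u w : added u w -> cadj (rev_nat u) (rev_nat w).
Proof.
have ck : cadj k.-1 k by rewrite /cadj; lia.
have cj : cadj j (csucc j) by apply: cadj_csucc; lia.
case/or4P => /andP[/eqP-> /eqP->];
  rewrite ?rev_nat_k ?rev_nat_j ?rev_nat_k1 ?rev_nat_csucc_j // cadj_sym //.
Qed.

Lemma cadj_rev_switched u w : u < n -> w < n -> switched u w ->
  cadj (rev_nat u) (rev_nat w).
Proof.
move=> un wn /orP[/andP[nrem]|]; last exact: cadj_rev_added.
rewrite (cadjE un wn) => /orP[/eqP we|].
  by rewrite we; apply: cadj_rev_csucc => //; rewrite -we.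
rewrite eq_cpred // => /eqP e; rewrite cadj_sym e; apply: cadj_rev_csucc => //.
by rewrite -e removed_sym.
Qed.

Lemma cadj_rev u w : u < n -> w < n -> cadj (rev_nat u) (rev_nat w) = switched u w.
Proof.
move=> un wn; apply/idP/idP; last exact: cadj_rev_switched.
rewrite cadjE ?rev_nat_lt // => /orP[/eqP e|].
  by rewrite -(rev_natK w) e -{1}(rev_natK u); apply/switched_rev_csucc/rev_nat_lt.
rewrite eq_cpred ?rev_nat_lt // => /eqP e.
rewrite switched_sym -(rev_natK u) e -{1}(rev_natK w).
exact/switched_rev_csucc/rev_nat_lt.
Qed.

End SegmentReversal.

Implicit Types g : {perm 'I_n}.

Definition ham_cycle (g : {perm 'I_n}) : graph n := [set e | cadj (g e.1) (g e.2)].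

Definition at_pos (g : {perm 'I_n}) (i : nat) : 'I_n := (g^-1)%g (inord i).

Lemma at_posK g i : i < n -> g (at_pos g i) = i :> nat.
Proof. by move=> ?; rewrite /at_pos permKV inordK. Qed.
Lemma at_pos_val g x : at_pos g (g x) = x.
Proof. by rewrite /at_pos inord_val permK. Qed.
Lemma eq_at_pos g x i : i < n -> (x == at_pos g i) = (g x == i :> nat).
Proof. by move=> ?; rewrite -(inj_eq (@perm_inj _ g)) -val_eqE /= at_posK. Qed.

Lemma ham_cycle_cycle_graph g : cycle_graph (ham_cycle g).
Proof.
have symg : symmetric (adj (ham_cycle g)).
  by move=> x y; rewrite /adj !inE /= cadj_sym.
split=> //; split; first split.
- by move=> u v; rewrite !inE /= cadj_sym.
- by move=> u; rewrite !inE /= cadj_irr.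
split.
  have path0 i : i < n -> connect (adj (ham_cycle g)) (at_pos g 0) (at_pos g i).
    elim: i => [_|i IH lt]; first exact: connect0.
    apply: connect_trans (IH (ltnW lt)) (connect1 _).
    by rewrite /adj inE /= !at_posK // ?(ltnW lt) // /cadj eqxx.
  move=> u v; rewrite -(at_pos_val g u) -(at_pos_val g v).
  apply: connect_trans (path0 _ (ltn_ord _)).
  by rewrite (sym_connect_sym symg); apply: path0.
move=> x; rewrite /deg; have -> : [set u | (x, u) \in ham_cycle g] =
    [set at_pos g (csucc (g x)); at_pos g (cpred (g x))].
  by apply/setP=> y; rewrite !inE /= !eq_at_pos ?csucc_lt ?cpred_lt // cadjE.
by rewrite cards2 eq_at_pos ?csucc_lt ?cpred_lt // at_posK ?csucc_lt // csucc_neq_cpred.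
Qed.

Definition mirror_nat p := if p == 0 then 0 else n - p.

Lemma mirror_natK p : p < n -> mirror_nat (mirror_nat p) = p.
Proof. rewrite /mirror_nat; case: ifP; case: ifP; lia. Qed.
Lemma mirror_nat_lt p : p < n -> mirror_nat p < n.
Proof. rewrite /mirror_nat; case: ifP; lia. Qed.

Definition mirror_fun (i : 'I_n) : 'I_n := inord (mirror_nat i).
Lemma mirror_funK : involutive mirror_fun.
Proof.
move=> i; apply: val_inj; have := mirror_nat_lt (ltn_ord i).
by rewrite /mirror_fun /= => lt; rewrite !inordK ?mirror_natK ?mirror_nat_lt.
Qed.
Definition mirror : {perm 'I_n} := perm (inv_inj mirror_funK).
Lemma mirrorE i : mirror i = mirror_nat i :> nat.
Proof. by rewrite permE /= inordK ?mirror_nat_lt. Qed.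

Lemma ham_cycle_mirror g : ham_cycle (g * mirror)%g = ham_cycle g.
Proof.
apply/setP=> -[x y]; rewrite !inE /= !permM !mirrorE /mirror_nat.
case: (g x) (g y) => [u un] [w wn] /=; rewrite /cadj; case: ifP; case: ifP; lia.
Qed.

Section SegmentSwitch.
Variables (k j : nat) (jn : j <= m.+2).

Definition rev_fun (i : 'I_n) : 'I_n := inord (rev_nat k j i).
Lemma rev_funK : involutive rev_fun.
Proof.
move=> i; apply: val_inj; have lt : rev_nat k j i < n by apply: rev_nat_lt.
by rewrite /rev_fun /= !inordK ?rev_natK.
Qed.
Definition rev_seg : {perm 'I_n} := perm (inv_inj rev_funK).
Lemma rev_segE i : rev_seg i = rev_nat k j i :> nat.
Proof. by rewrite permE /= inordK ?rev_nat_lt. Qed.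

Definition seg_switch g : switch n :=
  (at_pos g k.-1, at_pos g k, at_pos g j, at_pos g (csucc j)).

Hypotheses (k0 : 0 < k) (kj : k < j).
Hypothesis not_wrap : ~~ ((k == 1) && (j == m.+2)).

Lemma seg_switch_interchangeable g : interchangeableb (ham_cycle g) (seg_switch g).
Proof.
have jsn : csucc j < n by apply: csucc_lt; lia.
rewrite /= !inE /= !eq_at_pos ?at_posK //; try lia.
rewrite /cadj /csucc; case: ifP; lia.
Qed.

Lemma tau_seg_switch g : tau (seg_switch g) (ham_cycle g) = ham_cycle (g * rev_seg)%g.
Proof.
have jsn : csucc j < n by apply: csucc_lt; lia.
rewrite /tau seg_switch_interchangeable; apply/setP=> -[x y].
rewrite !inE /= !xpair_eqE !eq_at_pos //; try lia.
rewrite !permM !rev_segE; case: (g x) (g y) => [u un] [w wn] /=.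
by rewrite cadj_rev // /switched /removed /added !orbA.
Qed.

Lemma seg_switch_u_switch g : u_switch (ham_cycle g) (seg_switch g).
Proof.
apply: cycle_graph_u_switch; rewrite ?tau_seg_switch ?seg_switch_interchangeable //;
  exact: ham_cycle_cycle_graph.
Qed.

End SegmentSwitch.

Definition agree_below g g' k := forall u, g' u < k -> g u = g' u.

Lemma agree_below_ge g g' k v : agree_below g g' k -> k <= g' v -> k <= g v.
Proof.
move=> agr; apply: contraTT; rewrite -!ltnNge => gvk.
pose u := at_pos g' (g v).
have g'u : g' u = g v :> nat by rewrite at_posK.
have guv : g u = g v by apply: val_inj; rewrite agr ?g'u.
by rewrite -(perm_inj guv) g'u.
Qed.

Lemma agree_below_step g g' (s : {perm 'I_n}) k : k < n -> agree_below g g' k ->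
  (forall i : 'I_n, i < k -> s i = i) -> s (g (at_pos g' k)) = k :> nat ->
  agree_below (g * s)%g g' k.+1.
Proof.
move=> kn agr sfix sk u; rewrite ltnS leq_eqVlt permM => /orP[|ltk].
  by rewrite -eq_at_pos // => /eqP->; apply: val_inj => /=; rewrite sk at_posK.
by rewrite agr // sfix.
Qed.

Lemma ham_cycle_u_switch_sequence g g' k : 0 < k -> agree_below g g' k ->
  exists s, u_switch_sequence (ham_cycle g) s (ham_cycle g').
Proof.
have [d] := ubnP (n - k); elim: d => // d IH in k g *; rewrite ltnS => ltd k0 agr.
have [nk|kn] := leqP n k.
  exists [::]; congr ham_cycle; apply/permP=> u; apply: agr.
  exact: leq_trans (ltn_ord _) nk.
pose v := at_pos g' k.
have kj : k <= g v by apply: agree_below_ge agr _; rewrite at_posK.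
suff [s0 [t0 [s0fix s0v t0seq]]] : exists (s0 : {perm 'I_n}) t0,
    [/\ forall i : 'I_n, i < k -> s0 i = i, s0 (g v) = k :> nat
      & u_switch_sequence (ham_cycle g) t0 (ham_cycle (g * s0)%g)].
  have [t1 t1seq] := IH k.+1 (g * s0)%g ltac:(lia) ltac:(lia)
    (agree_below_step kn agr s0fix s0v).
  by exists (t0 ++ t1); apply: u_switch_sequence_cat t0seq t1seq.
have [gvk|gvk] := eqVneq (g v : nat) k.
  by exists 1%g, [::]; split=> [i _||/=]; rewrite ?perm1 ?mulg1.
have ltkj : k < g v by rewrite ltn_neqAle eq_sym gvk.
have jn : g v <= m.+2 by rewrite -ltnS.
have [/andP[/eqP k1 /eqP jlast]|nwrap] := boolP ((k == 1) && (g v == m.+2 :> nat)).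
  exists mirror, [::]; split; rewrite /= ?ham_cycle_mirror //.
    move=> i; rewrite k1 ltnS leqn0 => /eqP i0.
    by apply: val_inj => /=; rewrite mirrorE i0.
  by rewrite mirrorE jlast k1 /mirror_nat /=; lia.
exists (rev_seg k jn), [:: seg_switch k (g v) g]; split.
- move=> i ik; apply: val_inj => /=; rewrite rev_segE rev_nat_out //; lia.
- by rewrite rev_segE rev_nat_j.
- by split; [apply: seg_switch_u_switch | rewrite tau_seg_switch].
Qed.

Section Walk.
Variable C : graph n.
Hypotheses (sC : simple_graph C) (cC : connected C) (dC : forall v, deg C v = 2).

Let symC u v : (u, v) \in C -> (v, u) \in C. Proof. by case: sC => + _; apply. Qed.

Lemma nbhd_two x y z w : y \in nbhd C x -> z \in nbhd C x -> y != z ->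
  w \in nbhd C x -> (w == y) || (w == z).
Proof.
move=> yN zN yz; suff <- : [set y; z] = nbhd C x by rewrite !inE.
apply/eqP; rewrite eqEcard card_nbhd dC cards2 yz andbT.
by apply/subsetP=> t /set2P[]->.
Qed.

Definition next_nbr (p x : 'I_n) : 'I_n := odflt x [pick y in nbhd C x | y != p].

Lemma next_nbrP p x : (next_nbr p x \in nbhd C x) && (next_nbr p x != p).
Proof.
rewrite /next_nbr; case: pickP => [y /andP[-> ->] //|none].
have /card_gt1P[y1 [y2 [y1N y2N y12]]] : 1 < #|nbhd C x| by rewrite card_nbhd dC.
have := none y1; have := none y2; rewrite /= y1N y2N /=.
by move=> /negbFE/eqP y2p /negbFE/eqP y1p; rewrite y1p y2p eqxx in y12.
Qed.

(* walk_step i = (walk i, walk i.+1): each step leaves the current vertex by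
   the edge it did not arrive on. *)
Fixpoint walk_step (i : nat) : 'I_n * 'I_n :=
  if i is i'.+1 then let p := walk_step i' in (p.2, next_nbr p.1 p.2)
  else (ord0, next_nbr ord0 ord0).
Definition walk i := (walk_step i).1.

Lemma walk_adj i : (walk i, walk i.+1) \in C.
Proof.
case: i => [|i]; rewrite /walk /=.
  by case/andP: (next_nbrP ord0 ord0); rewrite inE.
by case/andP: (next_nbrP (walk_step i).1 (walk_step i).2); rewrite inE.
Qed.
Lemma walk_no_backtrack i : walk i.+2 != walk i.
Proof. by rewrite /walk /=; case/andP: (next_nbrP (walk_step i).1 (walk_step i).2). Qed.
Lemma walk_succ_neq i : walk i.+1 != walk i.
Proof. by apply: contraTneq (walk_adj i) => ->; case: sC. Qed.
Lemma walk_nbr_pred i : walk i \in nbhd C (walk i.+1).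
Proof. by rewrite inE; apply/symC/walk_adj. Qed.
Lemma walk_nbr_succ i : walk i.+1 \in nbhd C (walk i).
Proof. by rewrite inE; apply: walk_adj. Qed.

Definition walk_prefix j := map walk (iota 0 j).

Lemma walk_prefixS j : walk_prefix j.+1 = rcons (walk_prefix j) (walk j).
Proof. by rewrite /walk_prefix -[j.+1]addn1 iotaD map_cat cats1. Qed.
Lemma size_walk_prefix j : size (walk_prefix j) = j.
Proof. by rewrite size_map size_iota. Qed.
Lemma nth_walk_prefix i j : i < j -> nth ord0 (walk_prefix j) i = walk i.
Proof. by move=> ij; rewrite (nth_map 0) ?size_iota // nth_iota. Qed.
Lemma mem_walk_prefix i j : i < j -> walk i \in walk_prefix j.
Proof. by move=> ij; apply: map_f; rewrite mem_iota. Qed.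

Lemma uniq_walk_prefix J :
  (forall j, j < J -> walk j \notin walk_prefix j) -> uniq (walk_prefix J).
Proof.
elim: J => [//|J IH] fresh; rewrite walk_prefixS rcons_uniq fresh // IH // => j jJ.
exact/fresh/ltnW.
Qed.

Lemma walk_repeats : exists j, walk j \in walk_prefix j.
Proof.
have [j rep|fresh] := pickP (fun j : 'I_n.+1 => walk j \in walk_prefix j).
  by exists j.
have : uniq (walk_prefix n.+1).
  by apply: uniq_walk_prefix => j jn; apply/negbT; exact: fresh (Ordinal jn).
move/card_uniqP; rewrite size_walk_prefix => card_prefix.
by have := max_card (mem (walk_prefix n.+1)); rewrite card_prefix card_ord ltnn.
Qed.

Definition period := ex_minn walk_repeats.

Lemma period_repeats : walk period \in walk_prefix period.
Proof. by rewrite /period; case: ex_minnP. Qed.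
Lemma period_min j : walk j \in walk_prefix j -> period <= j.
Proof. by rewrite /period; case: ex_minnP => ? _ min /min. Qed.
Lemma uniq_period : uniq (walk_prefix period).
Proof. by apply: uniq_walk_prefix => j jJ; apply/negP => /period_min; lia. Qed.
Lemma index_walk_period i : i < period -> index (walk i) (walk_prefix period) = i.
Proof.
by move=> iJ; rewrite -(nth_walk_prefix iJ) index_uniq ?size_walk_prefix ?uniq_period.
Qed.
Lemma walk_period_inj a b : a < period -> b < period -> walk a = walk b -> a = b.
Proof. by move=> aJ bJ e; rewrite -(index_walk_period aJ) e index_walk_period. Qed.

Lemma period_gt0 : 0 < period.
Proof. by have := period_repeats; rewrite /walk_prefix; case: period. Qed.

(* A first repetition walk i with 0 < i would give walk i a third neighbour. *)
Lemma walk_period : walk period = walk 0.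
Proof.
have [i iJ e] : exists2 i, i < period & walk period = walk i.
  by case/mapP: period_repeats => i; rewrite mem_iota => /andP[_ iJ] ->; exists i.
case: i iJ e => [//|i] iJ e; exfalso.
move: iJ e walk_period_inj period_gt0; case: period => [//|J] iJ e inj _.
have [iJe|iJn] := eqVneq i.+1 J; first by move: (walk_succ_neq J); rewrite e iJe eqxx.
have prevJ : walk J \in nbhd C (walk i.+1) by rewrite -e walk_nbr_pred.
have ne : walk i != walk i.+2 by rewrite eq_sym walk_no_backtrack.
case/orP: (nbhd_two (walk_nbr_pred i) (walk_nbr_succ i.+1) ne prevJ) => /eqP E.
  by have := inj J i (ltnSn J) ltac:(lia) E; lia.
have Je := inj J i.+2 (ltnSn J) ltac:(lia) E.
by move: (walk_no_backtrack i.+1); rewrite -e Je eqxx.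
Qed.

Lemma period_gt2 : 2 < period.
Proof.
have := walk_period; have := period_gt0.
case: period => [|[|[|J]]] // _ e; [move: (walk_succ_neq 0)|move: (walk_no_backtrack 0)];
  by rewrite e eqxx.
Qed.

Lemma walk_nbhd i y : 0 < i -> y \in nbhd C (walk i) ->
  (y == walk i.-1) || (y == walk i.+1).
Proof.
case: i => [//|i] _; apply: nbhd_two (walk_nbr_pred i) (walk_nbr_succ i.+1) _.
by rewrite eq_sym walk_no_backtrack.
Qed.

Lemma walk0_nbhd y : y \in nbhd C (walk 0) -> (y == walk 1) || (y == walk period.-1).
Proof.
have J2 := period_gt2; have J0 : 0 < period by lia.
have lastN : walk period.-1 \in nbhd C (walk 0).
  by have := walk_nbr_pred period.-1; rewrite prednK ?walk_period.
apply: nbhd_two (walk_nbr_succ 0) lastN _.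
by apply/eqP => e; have := @walk_period_inj 1 period.-1 ltac:(lia) ltac:(lia) e; lia.
Qed.

Lemma walk_prefix_closed x y :
  x \in walk_prefix period -> (x, y) \in C -> y \in walk_prefix period.
Proof.
have J2 := period_gt2.
case/mapP => i; rewrite mem_iota /= => iJ -> xy.
have : y \in nbhd C (walk i) by rewrite inE.
case: i iJ {xy} => [_ /walk0_nbhd|i iJ /(walk_nbhd (ltn0Sn i))] /orP[] /eqP->;
  try by apply: mem_walk_prefix; lia.
have [lt|ge] := ltnP i.+2 period; first exact: mem_walk_prefix.
have -> : i.+2 = period by lia.
by rewrite walk_period; apply: mem_walk_prefix; lia.
Qed.

Lemma mem_walk_period v : v \in walk_prefix period.
Proof.
have closedW : closed (adj C) (mem (walk_prefix period)).
  move=> x y xy; apply/idP/idP => [/walk_prefix_closed|/walk_prefix_closed]; apply=> //.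
  exact: symC.
rewrite -(closed_connect closedW (cC ord0 v)).
by apply: (mem_walk_prefix (i := 0)); have := period_gt2; lia.
Qed.

Lemma period_eq : period = n.
Proof.
have card_prefix : #|walk_prefix period| = period.
  by move/card_uniqP: uniq_period => ->; rewrite size_walk_prefix.
apply/eqP; rewrite eqn_leq; apply/andP; split.
  by rewrite -card_prefix -[X in _ <= X]card_ord max_card.
rewrite -card_prefix -[X in X <= _]card_ord; apply: subset_leq_card.
by apply/subsetP => v _; apply: mem_walk_period.
Qed.

Lemma mem_walk_n v : v \in walk_prefix n.
Proof. by have := mem_walk_period v; rewrite period_eq. Qed.

Lemma index_walk_lt x : index x (walk_prefix n) < n.
Proof. by rewrite -[X in _ < X](size_walk_prefix n) index_mem mem_walk_n. Qed.

Definition walk_index (x : 'I_n) : 'I_n := inord (index x (walk_prefix n)).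

Lemma walk_indexE x : walk_index x = index x (walk_prefix n) :> nat.
Proof. by rewrite inordK ?index_walk_lt. Qed.
Lemma walk_indexK x : walk (walk_index x) = x.
Proof.
by rewrite walk_indexE -(nth_walk_prefix (index_walk_lt x)) nth_index ?mem_walk_n.
Qed.
Lemma walk_index_inj : injective walk_index.
Proof. by move=> x y e; rewrite -(walk_indexK x) e walk_indexK. Qed.

Definition walk_pos : {perm 'I_n} := perm walk_index_inj.

Lemma walk_posK x : walk (walk_pos x) = x.
Proof. by rewrite permE walk_indexK. Qed.

Lemma walk_pos_walk i : i < n -> walk_pos (walk i) = i :> nat.
Proof.
by rewrite permE walk_indexE; have := @index_walk_period i; rewrite period_eq.
Qed.

Lemma walk_csucc i : i < n -> (walk i, walk (csucc i)) \in C.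
Proof.
rewrite /csucc; case: eqP => [-> _|_ _]; last exact: walk_adj.
by have := walk_period; rewrite period_eq => <-; apply: walk_adj.
Qed.

Lemma walk_ham_cycle : ham_cycle walk_pos = C.
Proof.
apply: subset_regular_eq => [|x]; last first.
  by case: (ham_cycle_cycle_graph walk_pos) => _ [_ [_ ->]]; rewrite dC.
apply/subsetP=> -[x y]; rewrite inE /= cadjE // eq_cpred // => /orP[] /eqP e.
  by rewrite -(walk_posK x) -(walk_posK y) e; apply: walk_csucc.
by apply: symC; rewrite -(walk_posK x) -(walk_posK y) e; apply: walk_csucc.
Qed.

End Walk.

Lemma cycle_graph_ham_cycle C : cycle_graph C ->
  exists g, C = ham_cycle g /\ g ord0 = ord0.
Proof.
case=> _ [sC [cC dC]]; exists (walk_pos sC cC dC).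
split; first by rewrite walk_ham_cycle.
by apply: val_inj; apply: (walk_pos_walk _ _ _ (i := 0)).
Qed.

End HamiltonianCycles.

Theorem theorem3p8 (n : nat) (C C' : graph n) :
  cycle_graph C -> cycle_graph C' -> same_degree_sequence C C' ->
  exists s : seq (switch n), u_switch_sequence C s C'.
Proof.
(* The degree sequences agree automatically: both graphs are 2-regular. *)
move=> cycC cycC' _; have := cycle_graph_order cycC.
case: n C C' cycC cycC' => [|[|[|m]]] // C C' cycC cycC' _.
have [g [-> g0]] := cycle_graph_ham_cycle cycC.
have [g' [-> g'0]] := cycle_graph_ham_cycle cycC'.
apply: (@ham_cycle_u_switch_sequence m g g' 1) => // v; rewrite ltnS leqn0 => /eqP g'v0.
have -> : v = ord0 by apply: (@perm_inj _ g'); apply: val_inj; rewrite g'0.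
by rewrite g0 g'0.
Qed.
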